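(* Let $A$ be an augmented dga, $\mathfrak a\lhd A$ an ideal and $C$ a cocomplete coaugmented dgc. Being related by an $\mathfrak a$-trivial homotopy is an equivalence relation on twisting cochains $C\to A$. More precisely: (i) if $h\colon t\simeq u$ and $k\colon u\simeq v$ are $\mathfrak a$-trivial twisting cochain homotopies, then $h\cup k$ is an $\mathfrak a$-trivial homotopy from $t$ to $v$; (ii) if $h\colon t\simeq u$ is an $\mathfrak a$-trivial twisting cochain homotopy, then $h$ is invertible in $\operatorname{Hom}_0(C,A)$ with inverse $h^{-1}=\sum_{n=0}^\infty(1-h)^{\cup n}$, and $h^{-1}$ is an $\mathfrak a$-trivial homotopy from $u$ to $t$.
   Context: An ideal means a two-sided differential ideal. $\operatorname{Hom}(C,A)$ is an augmented dga with cup product $f\cup g=\mu_A(f\otimes g)\Delta_C$, unit $1=\eta_A\epsilon_C$. $C$ is cocomplete if for each $c\in C$ some $n$ has $(1_C-\epsilon_C)^{\otimes n}\Delta^{(n)}(c)=0$ (iterated diagonal). A twisting cochain is $t\in\operatorname{Hom}^1(C,A)$ with $d(t)=t\cup t$, $\epsilon_At=0$, $t\eta_C=0$. A twisting cochain homotopy $h\colon t\simeq u$ is $h\in\operatorname{Hom}_0(C,A)$ with $d(h)=t\cup h-h\cup u$, $\epsilon_Ah=\epsilon_C$, $h\eta_C=\eta_A$; it is $\mathfrak a$-trivial if $h\equiv\eta_A\epsilon_C\pmod{\mathfrak a}$. *)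

(* Differential graded (co)algebras over a commutative ring k,
   encoded without a tensor-product library: graded modules are total modules
   with a direct-sum decomposition given by projections; elements of tensor
   powers are represented by finite lists of simple tensors, and equality of
   tensors is tested through the universal property (all multilinear maps). *)
From HB Require Import structures.
From mathcomp Require Import all_boot all_order all_algebra.
Set Implicit Arguments. Unset Strict Implicit. Unset Printing Implicit Defensive.
Import Order.TTheory GRing.Theory Num.Theory.
Local Open Scope ring_scope.

Section Defs.
Variable k : comNzRingType.

Definition islinear (U V : lmodType k) (f : U -> V) :=
  forall (a : k) (x y : U), f (a *: x + y) = a *: f x + f y.

(* A Z-grading M = (+)_i M_i of a k-module M, given by the projections onto
   the homogeneous components; every element has finite support. *)
Record grading (M : lmodType k) := Grading {
  gproj : int -> M -> M;
  gsupp : M -> seq int;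
  gproj_lin : forall i, islinear (gproj i);
  gproj_proj : forall i j x, gproj i (gproj j x) = if i == j then gproj j x else 0;
  gsupp_uniq : forall x, uniq (gsupp x);
  gdecomp : forall x, x = \sum_(i <- gsupp x) gproj i x }.

Definition gsign (M : lmodType k) (G : grading M) (e : int) (x : M) : M :=
  \sum_(i <- gsupp G x) ((-1) ^+ absz (e * i)) *: gproj G i x.

(* Tensors in M^{(x)m}: finite sums of simple tensors (lists of factors). *)
Definition multilinear (M W : lmodType k) (phi : seq M -> W) :=
  forall (l r : seq M) (a : k) (x y : M),
    phi (l ++ (a *: x + y) :: r) = a *: phi (l ++ x :: r) + phi (l ++ y :: r).

Definition tev (M W : lmodType k) (phi : seq M -> W) (T : seq (seq M)) : W :=
  \sum_(s <- T) phi s.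

Definition teq (M : lmodType k) (T1 T2 : seq (seq M)) : Prop :=
  forall (W : lmodType k) (phi : seq M -> W),
    multilinear phi -> tev phi T1 = tev phi T2.

Definition dtens (C : lmodType k) (D : C -> seq (C * C)) (c : C) : seq (seq C) :=
  [seq [:: xy.1; xy.2] | xy <- D c].

Record dgc (C : lmodType k) := DGC {
  cgr : grading C;
  cdelta : C -> seq (C * C);       (* Delta c = sum of xy.1 (x) xy.2 *)
  ceps : C -> k;
  cd : C -> C;
  cone : C;                         (* coaugmentation eta_C(1) *)
  cdelta_lin : forall a x y,
    teq (dtens cdelta (a *: x + y))
        ([seq [:: a *: xy.1; xy.2] | xy <- cdelta x] ++ dtens cdelta y);
  cdelta_deg : forall n p q c, p + q != n ->
    teq [seq [:: gproj cgr p xy.1; gproj cgr q xy.2] | xy <- cdelta (gproj cgr n c)] [::];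
  cdelta_coass : forall c,
    teq (flatten [seq [seq [:: z.1; z.2; xy.2] | z <- cdelta xy.1] | xy <- cdelta c])
        (flatten [seq [seq [:: xy.1; z.1; z.2] | z <- cdelta xy.2] | xy <- cdelta c]);
  ceps_lin : forall a x y, ceps (a *: x + y) = a * ceps x + ceps y;
  ceps_deg : forall i c, i != 0 -> ceps (gproj cgr i c) = 0;
  counit_l : forall c, \sum_(xy <- cdelta c) ceps xy.1 *: xy.2 = c;
  counit_r : forall c, \sum_(xy <- cdelta c) ceps xy.2 *: xy.1 = c;
  cd_lin : islinear cd;
  cd_deg : forall i c, cd (gproj cgr i c) = gproj cgr (i + 1) (cd c);
  cd_sq : forall c, cd (cd c) = 0;
  ceps_d : forall c, ceps (cd c) = 0;
  cd_coder : forall c,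
    teq (dtens cdelta (cd c))
        ([seq [:: cd xy.1; xy.2] | xy <- cdelta c] ++
         [seq [:: gsign cgr 1 xy.1; cd xy.2] | xy <- cdelta c]);
  cone_deg : gproj cgr 0 cone = cone;
  cone_d : cd cone = 0;
  cone_eps : ceps cone = 1;
  cone_delta : teq (dtens cdelta cone) [:: [:: cone; cone]] }.

Record dga (A : algType k) := DGA {
  agr : grading A;
  ad : A -> A;
  aeps : A -> k;
  agr_one : gproj agr 0 1 = 1;
  agr_mul : forall i j x y,
    gproj agr (i + j) (gproj agr i x * gproj agr j y) = gproj agr i x * gproj agr j y;
  ad_lin : islinear ad;
  ad_deg : forall i x, ad (gproj agr i x) = gproj agr (i + 1) (ad x);
  ad_sq : forall x, ad (ad x) = 0;
  ad_leib : forall x y, ad (x * y) = ad x * y + gsign agr 1 x * ad y;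
  aeps_lin : forall a x y, aeps (a *: x + y) = a * aeps x + aeps y;
  aeps_mul : forall x y, aeps (x * y) = aeps x * aeps y;
  aeps_one : aeps 1 = 1;
  aeps_deg : forall i x, i != 0 -> aeps (gproj agr i x) = 0;
  aeps_d : forall x, aeps (ad x) = 0 }.

Section Hom.
Variables (A : algType k) (DA : dga A) (C : lmodType k) (DC : dgc C).

Definition dg_ideal (I : A -> Prop) : Prop :=
  I 0 /\
  (forall a x y, I x -> I y -> I (a *: x + y)) /\
  (forall x y, I y -> I (x * y)) /\
  (forall x y, I x -> I (x * y)) /\
  (forall x, I x -> I (ad DA x)) /\
  (forall i x, I x -> I (gproj (agr DA) i x)).

Fixpoint diter (n : nat) (c : C) : seq (seq C) :=
  match n with
  | 0 => [:: [:: c]]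
  | n'.+1 => flatten [seq match s with
                          | x :: r => [seq [:: z.1, z.2 & r] | z <- cdelta DC x]
                          | [::] => [:: [::]]
                          end | s <- diter n' c]
  end.
(* diter n c represents Delta^{(n+1)}(c) in C^{(x)(n+1)} *)

Definition cocomplete : Prop :=
  forall c : C, exists n : nat,
    teq [seq [seq x - ceps DC x *: cone DC | x <- s] | s <- diter n c] [::].

Definition homdeg (n : int) (f : C -> A) : Prop :=
  islinear f /\ forall i c, f (gproj (cgr DC) i c) = gproj (agr DA) (i + n) (f c).

(* cup product f \cup g = mu (f (x) g) Delta, where e is the degree of g *)
Definition cup (e : int) (f g : C -> A) (c : C) : A :=
  \sum_(xy <- cdelta DC c) f (gsign (cgr DC) e xy.1) * g xy.2.

Definition hone (c : C) : A := (ceps DC c)%:A.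

Definition hd (n : int) (f : C -> A) (c : C) : A :=
  ad DA (f c) - ((-1) ^+ absz n) *: f (cd DC c).

Definition twisting (t : C -> A) : Prop :=
  [/\ homdeg 1 t,
      (forall c, hd 1 t c = cup 1 t t c),
      (forall c, aeps DA (t c) = 0) &
      (forall a : k, t (a *: cone DC) = 0)].

Definition tc_homotopy (t u h : C -> A) : Prop :=
  [/\ homdeg 0 h,
      (forall c, hd 0 h c = cup 0 t h c - cup 1 h u c),
      (forall c, aeps DA (h c) = ceps DC c) &
      (forall a : k, h (a *: cone DC) = a%:A)].

Definition atrivial (I : A -> Prop) (h : C -> A) : Prop :=
  forall c, I (h c - hone c).

Definition atriv_homotopy (I : A -> Prop) (t u h : C -> A) : Prop :=
  tc_homotopy t u h /\ atrivial I h.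

Fixpoint cpow (f : C -> A) (n : nat) : C -> A :=
  match n with 0 => hone | n'.+1 => cup 0 f (cpow f n') end.

End Hom.
End Defs.

From Pilot Require Import Defs.
From HB Require Import structures.
From mathcomp Require Import all_boot all_order all_algebra.
From Stdlib Require Import ClassicalEpsilon.
Import GRing.Theory.
Local Open Scope ring_scope.
Set Implicit Arguments. Unset Strict Implicit.

(* By coassociativity and counitality the cup product makes Hom(C, A) an
   associative unital algebra on which d acts as a derivation, so the Leibniz
   rule gives d(h \cup k) = t \cup h \cup k - h \cup k \cup v for homotopies
   h : t ~ u and k : u ~ v.  For an a-trivial homotopy h the defect f = 1 - h
   vanishes on the coaugmentation, so f^n(c) only sees the reduced iterated
   diagonal of c and is 0 for large n by cocompleteness.  The geometric series
   sum_n f^n is therefore pointwise finite, and telescoping shows that it is a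
   two-sided cup inverse of h = 1 - f.  Differentiating h \cup h^-1 = 1 gives
   d(h^-1) = u \cup h^-1 - h^-1 \cup t, and h^-1 - 1 = h^-1 \cup (1 - h) takes
   values in a. *)

Lemma signr_abszD (R : pzRingType) (p q : int) :
  (-1) ^+ absz (p + q) = (-1) ^+ absz p * (-1) ^+ absz q :> R.
Proof.
have sign_int : (-1) ^+ absz (p + q) = (-1) ^+ absz p * (-1) ^+ absz q :> int.
  by rewrite -!expN1r exprzDr ?unitrN1.
by have := congr1 (intmul (1 : R)) sign_int; rewrite !rmorphM /= !rmorphXn /= rmorphN1.
Qed.

Section IsLinear.
Variables (k : comNzRingType) (U V : lmodType k) (f : U -> V).
Hypothesis f_lin : islinear f.

Lemma islinear0 : f 0 = 0.
Proof.
have := f_lin 1 0 0; rewrite !scale1r addr0 => f00.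
by apply: (addrI (f 0)); rewrite addr0 -f00.
Qed.

Lemma islinearD x y : f (x + y) = f x + f y.
Proof. by rewrite -[x]scale1r f_lin !scale1r. Qed.

Lemma islinearZ a x : f (a *: x) = a *: f x.
Proof. by rewrite -[a *: x]addr0 f_lin islinear0 addr0. Qed.

Lemma islinearB x y : f (x - y) = f x - f y.
Proof. by rewrite -scaleN1r islinearD islinearZ scaleN1r. Qed.

Lemma islinear_sum (I : Type) (r : seq I) (P : pred I) (F : I -> U) :
  f (\sum_(i <- r | P i) F i) = \sum_(i <- r | P i) f (F i).
Proof. by elim/big_rec2: _ => [|i y1 y2 _ <-]; rewrite ?islinear0 ?islinearD. Qed.

End IsLinear.

Lemma islinear_comp (k : comNzRingType) (U V W : lmodType k) (f : V -> W) (g : U -> V) :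
  islinear f -> islinear g -> islinear (fun x => f (g x)).
Proof. by move=> f_lin g_lin a x y; rewrite g_lin f_lin. Qed.

Section Grading.
Variables (k : comNzRingType) (M : lmodType k) (G : grading M).

Lemma gproj_notin i x : i \notin gsupp G x -> gproj G i x = 0.
Proof.
move=> i_out; rewrite (gdecomp G x) (islinear_sum (gproj_lin G i)) big1_seq // => j /andP[_ j_in].
by rewrite gproj_proj; case: eqP => // eq_ij; rewrite eq_ij j_in in i_out.
Qed.

Lemma big_gproj_supp (W : zmodType) (F : int -> M -> W) x (S : seq int) :
  (forall i, F i 0 = 0) -> uniq S -> {subset gsupp G x <= S} ->
  \sum_(i <- S) F i (gproj G i x) = \sum_(i <- gsupp G x) F i (gproj G i x).
Proof.
move=> F0 S_uniq supp_S.
rewrite (bigID (mem (gsupp G x))) /= [X in _ + X]big1 ?addr0; last by move=> i /gproj_notin ->.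
rewrite -big_filter; apply/perm_big/uniq_perm; rewrite ?filter_uniq ?gsupp_uniq // => i.
by rewrite mem_filter andb_idr //; apply: supp_S.
Qed.

Lemma gdecomp_sub x S : uniq S -> {subset gsupp G x <= S} ->
  x = \sum_(i <- S) gproj G i x.
Proof. by move=> *; rewrite (@big_gproj_supp _ (fun _ v => v)) //; apply: gdecomp. Qed.

Lemma gsign_sub e x S : uniq S -> {subset gsupp G x <= S} ->
  gsign G e x = \sum_(i <- S) (-1) ^+ absz (e * i) *: gproj G i x.
Proof.
move=> *; rewrite (@big_gproj_supp _ (fun i v => (-1) ^+ absz (e * i) *: v)) // => i.
exact: scaler0.
Qed.

Definition gsupp_cover (l : seq M) := undup (flatten (map (gsupp G) l)).

Lemma gsupp_cover_uniq l : uniq (gsupp_cover l).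
Proof. exact: undup_uniq. Qed.

Lemma gsupp_cover_sub l x : x \in l -> {subset gsupp G x <= gsupp_cover l}.
Proof.
by move=> x_l i i_x; rewrite mem_undup; apply/flattenP; exists (gsupp G x); rewrite ?map_f.
Qed.

Lemma gsign_lin e : islinear (gsign G e).
Proof.
move=> a x y; set S := gsupp_cover [:: x; y; a *: x + y].
have sign_S z : z \in [:: x; y; a *: x + y] ->
    gsign G e z = \sum_(i <- S) (-1) ^+ absz (e * i) *: gproj G i z.
  by move=> z_in; apply: gsign_sub; [apply: gsupp_cover_uniq | apply: gsupp_cover_sub].
rewrite !sign_S ?inE ?eqxx ?orbT // scaler_sumr -big_split; apply: eq_bigr => i _.
by rewrite gproj_lin scalerDr !scalerA mulrC.
Qed.

Lemma gsign0 x : gsign G 0 x = x.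
Proof. by rewrite [RHS](gdecomp G); apply: eq_bigr => i _; rewrite mul0r scale1r. Qed.

Lemma gsign_gproj e j x : gsign G e (gproj G j x) = (-1) ^+ absz (e * j) *: gproj G j x.
Proof.
set S := undup (j :: gsupp G (gproj G j x)).
have j_S : j \in S by rewrite mem_undup inE eqxx.
rewrite (@gsign_sub e _ S) ?undup_uniq //; last by move=> i i_in; rewrite mem_undup inE i_in orbT.
rewrite (bigD1_seq j) ?undup_uniq //= big1 ?addr0 => [|i /negPf neq_ij].
  by rewrite gproj_proj eqxx.
by rewrite gproj_proj neq_ij scaler0.
Qed.

End Grading.

Section DGA.
Variables (k : comNzRingType) (A : algType k) (DA : dga A).
Local Notation gsA := (gsign (agr DA)).

Lemma aeps_islinear : islinear (V := k^o) (aeps DA).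
Proof. exact: aeps_lin. Qed.

Lemma aeps_sum (I : Type) (r : seq I) (F : I -> A) :
  aeps DA (\sum_(i <- r) F i) = \sum_(i <- r) aeps DA (F i).
Proof. exact: (islinear_sum aeps_islinear). Qed.

Lemma aeps_scalar a : aeps DA a%:A = a.
Proof. by rewrite -[a%:A]addr0 aeps_lin aeps_one (islinear0 aeps_islinear) mulr1 addr0. Qed.

Lemma ad_sum (I : Type) (r : seq I) (F : I -> A) :
  ad DA (\sum_(i <- r) F i) = \sum_(i <- r) ad DA (F i).
Proof. exact: (islinear_sum (ad_lin DA)). Qed.

Lemma gsign1 e : gsA e 1 = 1.
Proof. by rewrite -(agr_one DA) gsign_gproj mulr0 scale1r. Qed.

Lemma gsignM e a b : gsA e (a * b) = gsA e a * gsA e b.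
Proof.
rewrite [in LHS](gdecomp (agr DA) a) [in LHS](gdecomp (agr DA) b) mulr_suml.
apply: etrans (islinear_sum (gsign_lin (agr DA) e) _ _ _) _.
rewrite /gsign mulr_suml; apply: eq_bigr => p _.
rewrite mulr_sumr; apply: etrans (islinear_sum (gsign_lin (agr DA) e) _ _ _) _.
rewrite mulr_sumr; apply: eq_bigr => q _.
by rewrite -agr_mul gsign_gproj agr_mul mulrDr signr_abszD -scalerAl -scalerAr scalerA.
Qed.

Lemma ad1 : ad DA 1 = 0.
Proof.
have := ad_leib DA 1 1; rewrite gsign1 !mulr1 !mul1r => ad11.
by apply: (addrI (ad DA 1)); rewrite addr0 -ad11.
Qed.

End DGA.

Section Sweedler.
Variables (k : comNzRingType) (C : lmodType k) (DC : dgc C).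
Local Notation gpC := (gproj (cgr DC)).
Local Notation eps := (ceps DC).
Local Notation cone := (cone DC).

Lemma ceps_islinear : islinear (V := k^o) eps.
Proof. exact: ceps_lin. Qed.

Lemma ceps_sum (I : Type) (r : seq I) (F : I -> C) :
  eps (\sum_(i <- r) F i) = \sum_(i <- r) eps (F i).
Proof. exact: (islinear_sum ceps_islinear). Qed.

Lemma cepsZ a x : eps (a *: x) = a * eps x.
Proof. exact: (islinearZ ceps_islinear). Qed.

Lemma ceps_gsign e c : eps (gsign (cgr DC) e c) = eps c.
Proof.
rewrite /gsign ceps_sum [in RHS](gdecomp (cgr DC) c) ceps_sum.
apply: eq_bigr => i _; rewrite cepsZ; have [->|i_neq0] := eqVneq i 0.
  by rewrite mulr0 mul1r.
by rewrite ceps_deg // mulr0.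
Qed.

Lemma ceps_gproj0 c : eps (gpC 0 c) = eps c.
Proof.
set S := undup (0 :: gsupp (cgr DC) c).
have zero_S : 0 \in S by rewrite mem_undup inE eqxx.
rewrite [in RHS](@gdecomp_sub _ _ (cgr DC) c S) ?undup_uniq //; last first.
  by move=> i i_c; rewrite mem_undup inE i_c orbT.
rewrite ceps_sum (bigD1_seq 0) ?undup_uniq //= big1 ?addr0 // => i.
exact: ceps_deg.
Qed.

Definition bilinear (W : lmodType k) (B : C -> C -> W) :=
  (forall y, islinear (B^~ y)) /\ (forall x, islinear (B x)).

Definition sweedler (W : lmodType k) (B : C -> C -> W) (c : C) : W :=
  \sum_(xy <- cdelta DC c) B xy.1 xy.2.

Definition uncurry2 (W : lmodType k) (B : C -> C -> W) (s : seq C) : W :=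
  if s is [:: x; y] then B x y else 0.

Lemma uncurry2_multilinear (W : lmodType k) (B : C -> C -> W) :
  bilinear B -> multilinear (uncurry2 B).
Proof.
case=> B_l B_r l r a x y.
case: l => [|z [|? l]] /=; last by case: l => [|? ?]; rewrite scaler0 addr0.
  by case: r => [|? [|? ?]] /=; rewrite ?B_l ?scaler0 ?addr0.
by case: r => [|? ?] /=; rewrite ?B_r ?scaler0 ?addr0.
Qed.

Lemma tev_uncurry2 (W : lmodType k) (B : C -> C -> W) (l : seq (C * C)) :
  tev (uncurry2 B) [seq [:: xy.1; xy.2] | xy <- l] = \sum_(xy <- l) B xy.1 xy.2.
Proof. by rewrite /tev big_map. Qed.

Lemma sweedler_lin (W : lmodType k) (B : C -> C -> W) :
  bilinear B -> islinear (sweedler B).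
Proof.
move=> B_bilin a x y; have := cdelta_lin DC a x y (uncurry2_multilinear B_bilin).
rewrite /dtens /tev big_cat !big_map /= /sweedler scaler_sumr => ->.
by congr (_ + _); apply: eq_bigr => xy _; rewrite (islinearZ (B_bilin.1 _)).
Qed.

Section Bilinear.
Variables (W : lmodType k) (B : C -> C -> W).
Hypothesis B_bilin : bilinear B.

Let B_ml := uncurry2_multilinear B_bilin.

Lemma sweedler_cone : sweedler B cone = B cone cone.
Proof. by have := cone_delta DC B_ml; rewrite /dtens tev_uncurry2 /tev big_seq1. Qed.

Lemma sweedler_cd c :
  sweedler B (cd DC c) =
  sweedler (fun x y => B (cd DC x) y) c + sweedler (fun x y => B (gsign (cgr DC) 1 x) (cd DC y)) c.
Proof. by have := cd_coder DC c B_ml; rewrite /dtens tev_uncurry2 /tev big_cat !big_map. Qed.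

Lemma bilinear_gproj p q : bilinear (fun x y => B (gpC p x) (gpC q y)).
Proof. by case: B_bilin => B_l B_r; split=> z a x y /=; rewrite gproj_lin ?B_l ?B_r. Qed.

Lemma sweedler_gproj_neq p q n c : p + q != n ->
  sweedler (fun x y => B (gpC p x) (gpC q y)) (gpC n c) = 0.
Proof.
by move=> pq_neq; have := cdelta_deg DC c pq_neq B_ml; rewrite /tev big_map big_nil.
Qed.

Lemma sweedler_gproj_eq p q c :
  sweedler (fun x y => B (gpC p x) (gpC q y)) (gpC (p + q) c) =
  sweedler (fun x y => B (gpC p x) (gpC q y)) c.
Proof.
set S := undup (p + q :: gsupp (cgr DC) c).
have pq_S : p + q \in S by rewrite mem_undup inE eqxx.
rewrite [in RHS](@gdecomp_sub _ _ (cgr DC) c S) ?undup_uniq //; last first.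
  by move=> i i_c; rewrite mem_undup inE i_c orbT.
rewrite (islinear_sum (sweedler_lin (bilinear_gproj p q))).
rewrite (bigD1_seq (p + q)) ?undup_uniq //= big1 ?addr0 // => i i_neq.
by apply: sweedler_gproj_neq; rewrite eq_sym.
Qed.

Lemma sweedler_gsplit (S : seq int) c : uniq S ->
  (forall xy, xy \in cdelta DC c ->
     {subset gsupp (cgr DC) xy.1 <= S} /\ {subset gsupp (cgr DC) xy.2 <= S}) ->
  sweedler B c = \sum_(p <- S) \sum_(q <- S) sweedler (fun x y => B (gpC p x) (gpC q y)) c.
Proof.
move=> S_uniq S_supp; rewrite /sweedler; under [RHS]eq_bigr do rewrite exchange_big.
rewrite [RHS]exchange_big; apply: eq_big_seq => xy /S_supp [S1 S2] /=.
rewrite [in LHS](gdecomp_sub S_uniq S1) (islinear_sum (B_bilin.1 _)); apply: eq_bigr => p _.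
by rewrite [in LHS](gdecomp_sub S_uniq S2) (islinear_sum (B_bilin.2 _)).
Qed.

Lemma sweedler_gproj (GW : grading W) n c :
  (forall p q x y, gproj GW (p + q) (B (gpC p x) (gpC q y)) = B (gpC p x) (gpC q y)) ->
  sweedler B (gpC n c) = gproj GW n (sweedler B c).
Proof.
move=> B_hom; set L := cdelta DC c ++ cdelta DC (gpC n c).
set S := gsupp_cover (cgr DC) (unzip1 L ++ unzip2 L).
have split_S z : z \in [:: c; gpC n c] -> sweedler B z =
    \sum_(p <- S) \sum_(q <- S) sweedler (fun x y => B (gpC p x) (gpC q y)) z.
  move=> z_in; apply: sweedler_gsplit; first exact: gsupp_cover_uniq.
  move=> xy xy_z; have xy_L : xy \in L.
    by move: z_in; rewrite !inE mem_cat => /orP[|] /eqP z_eq; rewrite -z_eq xy_z ?orbT.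
  by split; apply: gsupp_cover_sub; rewrite mem_cat map_f ?orbT.
have homog p q z : sweedler (fun x y => B (gpC p x) (gpC q y)) z =
    gproj GW (p + q) (sweedler (fun x y => B (gpC p x) (gpC q y)) z).
  by rewrite /sweedler (islinear_sum (gproj_lin GW _)); apply: eq_bigr => xy _; rewrite B_hom.
rewrite !split_S ?inE ?eqxx ?orbT // (islinear_sum (gproj_lin GW n)); apply: eq_bigr => p _.
rewrite (islinear_sum (gproj_lin GW n)); apply: eq_bigr => q _.
rewrite [in RHS]homog gproj_proj -homog.
have [->|n_neq] := eqVneq n (p + q); first exact: sweedler_gproj_eq.
by apply: sweedler_gproj_neq; rewrite eq_sym.
Qed.

End Bilinear.

Definition trilinear (W : lmodType k) (T : C -> C -> C -> W) :=
  [/\ forall y z, islinear (fun x => T x y z), forall x z, islinear (fun y => T x y z)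
    & forall x y, islinear (T x y)].

Definition uncurry3 (W : lmodType k) (T : C -> C -> C -> W) (s : seq C) : W :=
  if s is [:: x; y; z] then T x y z else 0.

Lemma uncurry3_multilinear (W : lmodType k) (T : C -> C -> C -> W) :
  trilinear T -> multilinear (uncurry3 T).
Proof.
case=> T1 T2 T3 l r a x y.
case: l => [|? [|? [|? l]]] /=; last by case: l => [|? ?]; rewrite scaler0 addr0.
- by case: r => [|? [|? [|? ?]]] /=; rewrite ?T1 ?scaler0 ?addr0.
- by case: r => [|? [|? ?]] /=; rewrite ?T2 ?scaler0 ?addr0.
- by case: r => [|? ?] /=; rewrite ?T3 ?scaler0 ?addr0.
Qed.

Lemma sweedler_coassoc (W : lmodType k) (T : C -> C -> C -> W) c : trilinear T ->
  sweedler (fun x y => sweedler (fun x1 x2 => T x1 x2 y) x) c =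
  sweedler (fun x y => sweedler (T x) y) c.
Proof.
move=> T_trilin; have := cdelta_coass DC c (uncurry3_multilinear T_trilin).
by rewrite /tev !big_flatten /= !big_map /sweedler; under eq_bigr do rewrite big_map;
  move=> ->; apply: eq_bigr => xy _; rewrite big_map.
Qed.

End Sweedler.

Section Cup.
Variables (k : comNzRingType) (A : algType k) (DA : dga A) (C : lmodType k) (DC : dgc C).
Local Notation gpC := (gproj (cgr DC)).
Local Notation gpA := (gproj (agr DA)).
Local Notation gsC := (gsign (cgr DC)).
Local Notation gsA := (gsign (agr DA)).
Local Notation cup := (cup DC).
Local Notation hone := (hone A DC).
Local Notation hd := (hd DA DC).
Local Notation homdeg := (homdeg DA DC).

Lemma bilinear_mul (f g : C -> A) :
  islinear f -> islinear g -> bilinear (fun x y => f x * g y).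
Proof.
move=> f_lin g_lin; split=> z a x y.
  by rewrite f_lin mulrDl -scalerAl.
by rewrite g_lin mulrDr -scalerAr.
Qed.

Lemma cup0E (f g : C -> A) c : cup 0 f g c = sweedler DC (fun x y => f x * g y) c.
Proof. by apply: eq_bigr => xy _; rewrite gsign0. Qed.

Lemma bilinear_cup e (f g : C -> A) :
  islinear f -> islinear g -> bilinear (fun x y => f (gsC e x) * g y).
Proof. by move=> f_lin; apply: bilinear_mul (islinear_comp f_lin (gsign_lin _ e)). Qed.

Lemma cup_lin e (f g : C -> A) : islinear f -> islinear g -> islinear (cup e f g).
Proof. by move=> f_lin g_lin; apply: sweedler_lin (bilinear_cup e f_lin g_lin). Qed.

Lemma homdeg0_lin f : homdeg 0 f -> islinear f.
Proof. by case. Qed.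

Lemma homdeg0_gproj f i x : homdeg 0 f -> f (gpC i x) = gpA i (f x).
Proof. by case=> _ f_deg; rewrite f_deg addr0. Qed.

Lemma homdeg0_gsign f e x : homdeg 0 f -> f (gsC e x) = gsA e (f x).
Proof.
move=> f_hom; set S := undup (gsupp (cgr DC) x ++ gsupp (agr DA) (f x)).
rewrite (@gsign_sub _ _ _ e x S) ?(@gsign_sub _ _ _ e (f x) S) ?undup_uniq //; first last.
- by move=> i i_x; rewrite mem_undup mem_cat i_x.
- by move=> i i_fx; rewrite mem_undup mem_cat i_fx orbT.
rewrite (islinear_sum (homdeg0_lin f_hom)); apply: eq_bigr => i _.
by rewrite (islinearZ (homdeg0_lin f_hom)) homdeg0_gproj.
Qed.

Lemma hone_lin : islinear hone.
Proof. by move=> a x y; rewrite /hone ceps_lin scalerDl scalerA. Qed.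

Lemma hone_homdeg : homdeg 0 hone.
Proof.
split=> [|i c]; first exact: hone_lin.
rewrite addr0 /hone (islinearZ (gproj_lin _ _)) -{2}(agr_one DA) gproj_proj.
have [->|i_neq0] := eqVneq i 0; first by rewrite ceps_gproj0 agr_one.
by rewrite ceps_deg // scale0r scaler0.
Qed.

Lemma cup_homdeg0 (f g : C -> A) : homdeg 0 f -> homdeg 0 g -> homdeg 0 (cup 0 f g).
Proof.
move=> f_hom g_hom; have f_lin := homdeg0_lin f_hom; have g_lin := homdeg0_lin g_hom.
split=> [|n c]; first exact: cup_lin.
rewrite addr0 !cup0E.
apply: (sweedler_gproj (GW := agr DA) (bilinear_mul f_lin g_lin)) => p q x y.
by rewrite !homdeg0_gproj // agr_mul.
Qed.

Lemma eq_cupl e (f f' g : C -> A) c : f =1 f' -> cup e f g c = cup e f' g c.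
Proof. by move=> eq_f; apply: eq_bigr => xy _; rewrite eq_f. Qed.

Lemma eq_cupr e (f g g' : C -> A) c : g =1 g' -> cup e f g c = cup e f g' c.
Proof. by move=> eq_g; apply: eq_bigr => xy _; rewrite eq_g. Qed.

Lemma cupBl e (f f' g : C -> A) c :
  cup e (fun x => f x - f' x) g c = cup e f g c - cup e f' g c.
Proof. by rewrite /Defs.cup -sumrB; apply: eq_bigr => xy _; rewrite mulrBl. Qed.

Lemma cupBr e (f g g' : C -> A) c :
  cup e f (fun x => g x - g' x) c = cup e f g c - cup e f g' c.
Proof. by rewrite /Defs.cup -sumrB; apply: eq_bigr => xy _; rewrite mulrBr. Qed.

Lemma cup_sumr e (f : C -> A) (I : Type) (r : seq I) (F : I -> C -> A) c :
  cup e f (fun x => \sum_(i <- r) F i x) c = \sum_(i <- r) cup e f (F i) c.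
Proof. by rewrite /Defs.cup; under eq_bigr do rewrite mulr_sumr; apply: exchange_big. Qed.

Lemma cup_suml e (g : C -> A) (I : Type) (r : seq I) (F : I -> C -> A) c :
  cup e (fun x => \sum_(i <- r) F i x) g c = \sum_(i <- r) cup e (F i) g c.
Proof. by rewrite /Defs.cup /=; under eq_bigr do rewrite mulr_suml; apply: exchange_big. Qed.

Lemma cup_onel e (g : C -> A) c : islinear g -> cup e hone g c = g c.
Proof.
move=> g_lin; rewrite -[in RHS](counit_l DC c) (islinear_sum g_lin); apply: eq_bigr => xy _.
by rewrite (islinearZ g_lin) /Defs.hone ceps_gsign -scalerAl mul1r.
Qed.

Lemma cup_oner (f : C -> A) c : islinear f -> cup 0 f hone c = f c.
Proof.
move=> f_lin; rewrite -[in RHS](counit_r DC c) (islinear_sum f_lin); apply: eq_bigr => xy _.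
by rewrite (islinearZ f_lin) /Defs.hone gsign0 -scalerAr mulr1.
Qed.

Lemma trilinear_mul (f g h : C -> A) :
  islinear f -> islinear g -> islinear h -> trilinear (fun x y z => f x * g y * h z).
Proof.
move=> f_lin g_lin h_lin; split=> [y z|x z|x y] a u v.
- by rewrite f_lin !mulrDl -!scalerAl.
- by rewrite g_lin mulrDr mulrDl -scalerAr -scalerAl.
- by rewrite h_lin mulrDr -scalerAr.
Qed.

Lemma cupA e (f g h : C -> A) c : islinear f -> islinear g -> islinear h ->
  cup 0 (cup e f g) h c = cup e f (cup 0 g h) c.
Proof.
move=> f_lin g_lin h_lin; pose T x y z := f (gsC e x) * g y * h z.
have fe_lin := islinear_comp f_lin (gsign_lin (cgr DC) e).
have T_trilin : trilinear T := trilinear_mul fe_lin g_lin h_lin.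
rewrite cup0E; transitivity (sweedler DC (fun x y => sweedler DC (fun x1 x2 => T x1 x2 y) x) c).
  by apply: eq_bigr => xy _; rewrite mulr_suml.
rewrite sweedler_coassoc //; apply: eq_bigr => xy _; rewrite cup0E mulr_sumr.
by apply: eq_bigr => z _; rewrite mulrA.
Qed.

Lemma cupA_sign (f g h : C -> A) c : homdeg 0 f -> homdeg 0 g -> islinear h ->
  cup 1 f (cup 1 g h) c = cup 1 (cup 0 f g) h c.
Proof.
move=> f_hom g_hom h_lin; pose T x y z := f (gsC 1 x) * g (gsC 1 y) * h z.
have f1_lin := islinear_comp (homdeg0_lin f_hom) (gsign_lin (cgr DC) 1).
have g1_lin := islinear_comp (homdeg0_lin g_hom) (gsign_lin (cgr DC) 1).
have T_trilin : trilinear T := trilinear_mul f1_lin g1_lin h_lin.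
transitivity (sweedler DC (fun x y => sweedler DC (T x) y) c).
  by apply: eq_bigr => xy _; rewrite mulr_sumr; apply: eq_bigr => z _; rewrite mulrA.
rewrite -sweedler_coassoc //; apply: eq_bigr => xy _.
rewrite (homdeg0_gsign _ _ (cup_homdeg0 f_hom g_hom)) cup0E.
have -> : gsA 1 (sweedler DC (fun x y => f x * g y) xy.1) =
    \sum_(z <- cdelta DC xy.1) gsA 1 (f z.1 * g z.2).
  exact: (islinear_sum (gsign_lin (agr DA) 1) _ xpredT (fun z => f z.1 * g z.2)).
rewrite mulr_suml; apply: eq_bigr => z _.
by rewrite gsignM -!homdeg0_gsign.
Qed.

Lemma hd0E (f : C -> A) c : hd 0 f c = ad DA (f c) - f (cd DC c).
Proof. by rewrite /Defs.hd scale1r. Qed.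

Lemma hd_lin (f : C -> A) : islinear f -> islinear (hd 0 f).
Proof.
move=> f_lin a x y; rewrite !hd0E (cd_lin DC) !f_lin (ad_lin DA).
by rewrite scalerBr opprD addrACA.
Qed.

Lemma hd_hone c : hd 0 hone c = 0.
Proof. by rewrite hd0E /Defs.hone (islinearZ (ad_lin DA)) ad1 ceps_d scale0r scaler0 subrr. Qed.

Lemma hd_cup (f g : C -> A) c : homdeg 0 f -> islinear g ->
  hd 0 (cup 0 f g) c = cup 0 (hd 0 f) g c + cup 1 f (hd 0 g) c.
Proof.
move=> f_hom g_lin; have f_lin := homdeg0_lin f_hom.
have ad_cup : ad DA (cup 0 f g c) =
    sweedler DC (fun x y => ad DA (f x) * g y) c + cup 1 f (fun y => ad DA (g y)) c.
  rewrite cup0E ad_sum -big_split; apply: eq_bigr => xy _.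
  by rewrite ad_leib (homdeg0_gsign _ _ f_hom).
have cup_cd : cup 0 f g (cd DC c) =
    sweedler DC (fun x y => f (cd DC x) * g y) c + cup 1 f (fun y => g (cd DC y)) c.
  by rewrite cup0E sweedler_cd //; apply: bilinear_mul.
rewrite hd0E ad_cup cup_cd (eq_cupl 0 g c (hd0E f)) (eq_cupr 1 f c (hd0E g)).
by rewrite cupBl cupBr !cup0E opprD addrACA.
Qed.

Lemma aeps_cup (f g : C -> A) c : islinear f -> (forall x, aeps DA (g x) = ceps DC x) ->
  aeps DA (cup 0 f g c) = aeps DA (f c).
Proof.
move=> f_lin aeps_g; rewrite cup0E -[in RHS](counit_r DC c) (islinear_sum f_lin) !aeps_sum.
apply: eq_bigr => xy _.
by rewrite aeps_mul aeps_g (islinearZ f_lin) (islinearZ (aeps_islinear DA)) mulrC.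
Qed.

Lemma cup_cone (f g : C -> A) : islinear f -> islinear g ->
  cup 0 f g (cone DC) = f (cone DC) * g (cone DC).
Proof. by move=> f_lin g_lin; rewrite cup0E sweedler_cone //; apply: bilinear_mul. Qed.

End Cup.

Section CupPowers.
Variables (k : comNzRingType) (A : algType k) (DA : dga A) (C : lmodType k) (DC : dgc C).
Variable f : C -> A.
Hypothesis f_lin : islinear f.
Local Notation cpow := (cpow DC f).
Local Notation cone := (cone DC).

Lemma cpow_lin n : islinear (cpow n).
Proof. by elim: n => [|n IHn]; [apply: hone_lin | apply: cup_lin]. Qed.

Lemma cpow_homdeg n : homdeg DA DC 0 f -> homdeg DA DC 0 (cpow n).
Proof. by move=> f_hom; elim: n => [|n IHn]; [apply: hone_homdeg | apply: cup_homdeg0]. Qed.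

Lemma cpowSr n c : cpow n.+1 c = cup DC 0 (cpow n) f c.
Proof.
elim: n c => [|n IHn] c /=; first by rewrite cup_oner // cup_onel.
rewrite cupA //; last exact: cpow_lin.
by apply: eq_cupr => x; rewrite -IHn.
Qed.

Lemma cpow_cone n : f cone = 0 -> cpow n.+1 cone = 0.
Proof. by move=> f_cone; rewrite /= cup_cone ?f_cone ?mul0r //; apply: cpow_lin. Qed.

Definition head_prod (F : C -> A) (s : seq C) : A :=
  if s is x :: r then F x * \prod_(y <- r) f y else 0.

Lemma head_prod_multilinear F : islinear F -> multilinear (head_prod F).
Proof.
move=> F_lin l r a x y; case: l => [|z l] /=; first by rewrite F_lin mulrDl -scalerAl.
by rewrite /= !big_cat !big_cons /= f_lin mulrDl !mulrDr -scalerAl -!scalerAr.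
Qed.

Lemma tev_head_prod_diterS F n c :
  tev (head_prod F) (diter DC n.+1 c) = tev (head_prod (cup DC 0 F f)) (diter DC n c).
Proof.
rewrite /tev big_flatten /= big_map; apply: eq_bigr => -[|x r] _ /=; first by rewrite big_seq1.
rewrite big_map cup0E /sweedler mulr_suml; apply: eq_bigr => z _.
by rewrite /= big_cons mulrA.
Qed.

Lemma tev_head_prod_diter F n c :
  tev (head_prod F) (diter DC n c) = iter n (fun G => cup DC 0 G f) F c.
Proof.
elim: n F => [|n IHn] F; first by rewrite /tev big_seq1 /= big_nil mulr1.
by rewrite tev_head_prod_diterS IHn iterSr.
Qed.

Lemma iter_cupr_cpow n j c : iter n (fun G => cup DC 0 G f) (cpow j) c = cpow (n + j) c.
Proof.
elim: n c => [|n IHn] c //.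
by rewrite iterS addSn cpowSr; apply: eq_cupl.
Qed.

Lemma islinear_sub_coaug (W : lmodType k) (F : C -> W) x :
  islinear F -> F cone = 0 -> F (x - ceps DC x *: cone) = F x.
Proof.
by move=> F_lin F_cone; rewrite (islinearB F_lin) (islinearZ F_lin) F_cone scaler0 subr0.
Qed.

Lemma cpow_eventually0 c : f cone = 0 -> cocomplete DC ->
  exists N, forall M, (N <= M)%N -> cpow M c = 0.
Proof.
move=> f_cone C_cocomplete; have [N reduced0] := C_cocomplete c.
exists N.+1 => M /subnK <-; set j := (M - N.+1)%N.
have G_lin : islinear (cpow j.+1) by apply: cpow_lin.
have G_cone : cpow j.+1 cone = 0 by apply: cpow_cone.
rewrite -addSnnS addnC -iter_cupr_cpow -tev_head_prod_diter.
have := reduced0 _ _ (head_prod_multilinear G_lin); rewrite /tev big_nil big_map => tev0.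
rewrite -[RHS]tev0; apply: eq_bigr => -[|x r] _ //=.
rewrite big_map islinear_sub_coaug //; congr (_ * _).
by apply: eq_bigr => y _; rewrite islinear_sub_coaug.
Qed.

End CupPowers.

Section Ideal.
Variables (k : comNzRingType) (A : algType k) (DA : dga A) (C : lmodType k) (DC : dgc C).
Variable I : A -> Prop.
Hypothesis I_ideal : dg_ideal DA I.
Local Notation hone := (hone A DC).
Local Notation atrivial := (atrivial DC I).

Lemma ideal0 : I 0.
Proof. by case: I_ideal. Qed.

Lemma idealD x y : I x -> I y -> I (x + y).
Proof. by case: I_ideal => _ [I_lin _] Ix Iy; have := I_lin 1 x y Ix Iy; rewrite scale1r. Qed.

Lemma idealN x : I x -> I (- x).
Proof.
by case: I_ideal => I0 [I_lin _] Ix; have := I_lin (-1) x 0 Ix I0; rewrite addr0 scaleN1r.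
Qed.

Lemma ideal_sum (J : Type) (r : seq J) (F : J -> A) : (forall j, I (F j)) -> I (\sum_(j <- r) F j).
Proof. by move=> IF; elim/big_rec: _ => [|j x _ Ix]; [apply: ideal0 | apply: idealD]. Qed.

Lemma ideal_cupl e (f g : C -> A) c : (forall x, I (f x)) -> I (cup DC e f g c).
Proof. by case: I_ideal => _ [_ [_ [I_mulr _]]] If; apply: ideal_sum => xy; apply: I_mulr. Qed.

Lemma ideal_cupr e (f g : C -> A) c : (forall x, I (g x)) -> I (cup DC e f g c).
Proof. by case: I_ideal => _ [_ [I_mull _]] Ig; apply: ideal_sum => xy; apply: I_mull. Qed.

Lemma atrivial_hone : atrivial hone.
Proof. by move=> c; rewrite subrr; apply: ideal0. Qed.

Lemma atrivial_cup (h h' : C -> A) : islinear h' -> atrivial h -> atrivial h' ->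
  atrivial (cup DC 0 h h').
Proof.
move=> h'_lin h_triv h'_triv c.
have -> : cup DC 0 h h' c - hone c = cup DC 0 (fun x => h x - hone x) h' c + (h' c - hone c).
  by rewrite cupBl cup_onel // addrA subrK.
by apply: idealD => //; apply: ideal_cupl.
Qed.

Lemma atrivial_cup_inverse (h g : C -> A) : islinear g ->
  (forall c, cup DC 0 g h c = hone c) -> atrivial h -> atrivial g.
Proof.
move=> g_lin gh1 h_triv c.
rewrite -{1}(cup_oner DC c g_lin) -gh1 -cupBr; apply: ideal_cupr => x.
by rewrite -opprB; apply: idealN.
Qed.

End Ideal.

Section Homotopy.
Variables (k : comNzRingType) (A : algType k) (DA : dga A) (C : lmodType k) (DC : dgc C).
Local Notation cup := (cup DC).
Local Notation hone := (hone A DC).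
Local Notation hd := (hd DA DC).
Local Notation tc_homotopy := (tc_homotopy DA DC).
Local Notation cone := (cone DC).

Lemma hone_cone : hone cone = 1.
Proof. by rewrite /Defs.hone cone_eps scale1r. Qed.

Lemma scalar_cone (h : C -> A) : islinear h -> h cone = 1 -> forall a, h (a *: cone) = a%:A.
Proof. by move=> h_lin h_cone a; rewrite (islinearZ h_lin) h_cone. Qed.

Lemma tc_homotopy_cone (t u h : C -> A) : tc_homotopy t u h -> h cone = 1.
Proof. by case=> _ _ _ /(_ 1); rewrite scale1r scale1r. Qed.

Lemma tc_homotopy_hone t : islinear t -> tc_homotopy t t hone.
Proof.
move=> t_lin; split=> [|c|c|]; first exact: hone_homdeg.
- by rewrite hd_hone cup_oner // cup_onel // subrr.
- exact: aeps_scalar.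
- by apply: scalar_cone hone_cone; apply: hone_lin.
Qed.

Lemma tc_homotopy_cup (t u v h h' : C -> A) :
  islinear t -> islinear u -> islinear v ->
  tc_homotopy t u h -> tc_homotopy u v h' -> tc_homotopy t v (cup 0 h h').
Proof.
move=> t_lin u_lin v_lin hom_h hom_h'.
case: (hom_h) => h_hom dh aeps_h _; case: (hom_h') => h'_hom dh' aeps_h' _.
have h_lin := homdeg0_lin h_hom; have h'_lin := homdeg0_lin h'_hom.
split=> [|c|c|]; first exact: cup_homdeg0.
- rewrite hd_cup // (eq_cupl DC 0 h' c dh) (eq_cupr DC 1 h c dh') cupBl cupBr.
  rewrite cupA // (cupA DC 1) // (cupA_sign _ h_hom h'_hom v_lin).
  by rewrite addrA subrK.
- by rewrite aeps_cup.
- apply: scalar_cone; first exact: cup_lin.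
  by rewrite cup_cone // (tc_homotopy_cone hom_h) (tc_homotopy_cone hom_h') mulr1.
Qed.

Lemma tc_homotopy_inverse (t u h g : C -> A) :
  islinear t -> islinear u -> tc_homotopy t u h -> homdeg DA DC 0 g ->
  (forall c, cup 0 h g c = hone c) -> (forall c, cup 0 g h c = hone c) ->
  tc_homotopy u t g.
Proof.
move=> t_lin u_lin hom_h g_hom hg1 gh1; case: (hom_h) => h_hom dh aeps_h _.
have h_lin := homdeg0_lin h_hom; have g_lin := homdeg0_lin g_hom.
have dg_lin := hd_lin DA DC g_lin; have ug_lin : islinear (cup 0 u g) by apply: cup_lin.
(* differentiating [h \cup g = 1] *)
have h_dg x : cup 1 h (hd 0 g) x = cup 1 h (cup 0 u g) x - t x.
  have := hd_cup x h_hom g_lin.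
  rewrite !hd0E !hg1 -hd0E hd_hone (eq_cupl DC 0 g x dh) cupBl cupA // (cupA DC 1) //.
  rewrite (eq_cupr DC 0 t x hg1) cup_oner // => /eqP.
  by rewrite eq_sym addrC addr_eq0 => /eqP ->; rewrite opprB.
split=> [|c|c|] //.
- rewrite -(cup_onel DC 1 c dg_lin) -(eq_cupl DC 1 _ c gh1) -(cupA_sign _ g_hom h_hom dg_lin).
  rewrite (eq_cupr DC 1 g c h_dg) cupBr (cupA_sign _ g_hom h_hom ug_lin).
  by rewrite (eq_cupl DC 1 _ c gh1) cup_onel.
- by rewrite -(aeps_cup c g_lin aeps_h) gh1; apply: aeps_scalar.
- apply: (scalar_cone g_lin).
  by rewrite -[LHS]mulr1 -[X in _ * X](tc_homotopy_cone hom_h) -cup_cone // gh1 hone_cone.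
Qed.

End Homotopy.

Section CupInverse.
Variables (k : comNzRingType) (A : algType k) (DA : dga A) (C : lmodType k) (DC : dgc C).
Variable h : C -> A.
Hypotheses (h_hom : homdeg DA DC 0 h) (h_cone : h (cone DC) = 1).
Hypothesis C_cocomplete : cocomplete DC.
Local Notation hone := (hone A DC).
Local Notation f := (fun x => hone x - h x).
Local Notation cpow := (cpow DC f).

Lemma defect_homdeg : homdeg DA DC 0 f.
Proof.
have h_lin := homdeg0_lin h_hom; split=> [a x y|i c].
  by rewrite hone_lin h_lin scalerBr opprD addrACA.
rewrite addr0 (homdeg0_gproj _ _ (hone_homdeg DA DC)) (homdeg0_gproj _ _ h_hom).
by rewrite (islinearB (gproj_lin _ _)).
Qed.

Let f_lin := homdeg0_lin defect_homdeg.

Lemma sum_cpow_defect_telescope M c :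
  \sum_(n < M) (cpow n c - cpow n.+1 c) = hone c - cpow M c.
Proof.
rewrite -(big_mkord xpredT (fun n => cpow n c - cpow n.+1 c)).
by rewrite (telescope_sumr_eq (fun n => - cpow n c)) // => [|n _]; rewrite opprK addrC.
Qed.

Lemma cup_geom_r M c : cup DC 0 h (fun x => \sum_(n < M) cpow n x) c = hone c - cpow M c.
Proof.
rewrite cup_sumr -sum_cpow_defect_telescope; apply: eq_bigr => n _.
have h_eq x : h x = hone x - f x by rewrite opprB addrC subrK.
by rewrite (eq_cupl DC 0 _ c h_eq) cupBl cup_onel //; apply: cpow_lin.
Qed.

Lemma cup_geom_l M c : cup DC 0 (fun x => \sum_(n < M) cpow n x) h c = hone c - cpow M c.
Proof.
rewrite cup_suml -sum_cpow_defect_telescope; apply: eq_bigr => n _.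
have h_eq x : h x = hone x - f x by rewrite opprB addrC subrK.
by rewrite (eq_cupr DC 0 _ c h_eq) cupBr cup_oner ?cpowSr //; apply: cpow_lin.
Qed.

Lemma cpow_defect_eventually0 c : exists N, forall M, (N <= M)%N -> cpow M c = 0.
Proof. by apply: cpow_eventually0 => //; rewrite h_cone hone_cone subrr. Qed.

Definition defect_order c : nat :=
  proj1_sig (constructive_indefinite_description _ (cpow_defect_eventually0 c)).

Lemma cpow_defect_order c M : (defect_order c <= M)%N -> cpow M c = 0.
Proof. exact: (proj2_sig (constructive_indefinite_description _ (cpow_defect_eventually0 c))). Qed.

Definition cup_inverse c := \sum_(n < defect_order c) cpow n c.

Lemma cup_inverseE c M : (defect_order c <= M)%N -> cup_inverse c = \sum_(n < M) cpow n c.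
Proof.
move=> le_M; rewrite /cup_inverse (big_ord_widen _ (fun n => cpow n c) le_M).
rewrite [RHS](bigID (fun n : 'I_M => n < defect_order c)%N) /= [X in _ = _ + X]big1 ?addr0 //.
by move=> n; rewrite -leqNgt; apply: cpow_defect_order.
Qed.

Lemma cup_inverseE_seq (s : seq C) : exists N, forall M x, (N <= M)%N -> x \in s ->
  cup_inverse x = \sum_(n < M) cpow n x.
Proof.
exists (\max_(x <- s) defect_order x) => M x le_M x_s; apply: cup_inverseE.
by apply: leq_trans le_M; apply: leq_bigmax_seq.
Qed.

Lemma cup_inverse_r c : cup DC 0 h cup_inverse c = hone c.
Proof.
have [N invE] := cup_inverseE_seq (unzip2 (cdelta DC c)); set M := maxn N (defect_order c).
transitivity (cup DC 0 h (fun x => \sum_(n < M) cpow n x) c).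
  by apply: eq_big_seq => xy xy_c; rewrite (invE M) ?leq_maxl ?map_f.
by rewrite cup_geom_r cpow_defect_order ?leq_maxr // subr0.
Qed.

Lemma cup_inverse_l c : cup DC 0 cup_inverse h c = hone c.
Proof.
have [N invE] := cup_inverseE_seq (unzip1 (cdelta DC c)); set M := maxn N (defect_order c).
transitivity (cup DC 0 (fun x => \sum_(n < M) cpow n x) h c).
  by apply: eq_big_seq => xy xy_c; rewrite !gsign0 (invE M) ?leq_maxl ?map_f.
by rewrite cup_geom_l cpow_defect_order ?leq_maxr // subr0.
Qed.

Lemma cup_inverse_homdeg : homdeg DA DC 0 cup_inverse.
Proof.
split=> [a x y|i c].
  set M := maxn (defect_order (a *: x + y)) (maxn (defect_order x) (defect_order y)).
  rewrite (@cup_inverseE _ M) ?leq_maxl // (@cup_inverseE x M); last first.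
    by rewrite (leq_trans (leq_maxl _ _) (leq_maxr _ _)).
  rewrite (@cup_inverseE y M); last by rewrite (leq_trans (leq_maxr _ _) (leq_maxr _ _)).
  by rewrite scaler_sumr -big_split; apply: eq_bigr => n _; apply: cpow_lin.
set M := maxn (defect_order (gproj (cgr DC) i c)) (defect_order c).
rewrite addr0 (@cup_inverseE _ M) ?leq_maxl // (@cup_inverseE c M) ?leq_maxr //.
rewrite (islinear_sum (gproj_lin _ _)); apply: eq_bigr => n _.
by apply: homdeg0_gproj; apply: cpow_homdeg defect_homdeg.
Qed.

End CupInverse.

Theorem lemma2p2 (k : comNzRingType) (A : algType k) (DA : dga A)
  (I : A -> Prop) (C : lmodType k) (DC : dgc C) :
  dg_ideal DA I -> cocomplete DC ->
  (forall t, twisting DA DC t -> atriv_homotopy DA DC I t t (hone A DC)) /\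
  (forall t u v h h', twisting DA DC t -> twisting DA DC u -> twisting DA DC v ->
     atriv_homotopy DA DC I t u h -> atriv_homotopy DA DC I u v h' ->
     atriv_homotopy DA DC I t v (cup DC 0 h h')) /\
  (forall t u h, twisting DA DC t -> twisting DA DC u ->
     atriv_homotopy DA DC I t u h ->
     exists g : C -> A,
       [/\ homdeg DA DC 0 g,
           (forall c, cup DC 0 h g c = hone A DC c),
           (forall c, cup DC 0 g h c = hone A DC c),
           (forall c, exists N : nat, forall M : nat, (N <= M)%N ->
              g c = \sum_(n < M) cpow DC (fun x => hone A DC x - h x) n c) &
           atriv_homotopy DA DC I u t g]).
Proof.
move=> I_ideal C_cocomplete; split; [|split].
- move=> t [[t_lin _] _ _ _]; split; first exact: tc_homotopy_hone.
  exact (atrivial_hone DC I_ideal).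
- move=> t u v h h' [[t_lin _] _ _ _] [[u_lin _] _ _ _] [[v_lin _] _ _ _].
  move=> [hom_h h_triv] [hom_h' h'_triv].
  split; first exact: tc_homotopy_cup t_lin u_lin v_lin hom_h hom_h'.
  case: (hom_h') => /homdeg0_lin h'_lin _ _ _.
  exact (atrivial_cup I_ideal h'_lin h_triv h'_triv).
move=> t u h [[t_lin _] _ _ _] [[u_lin _] _ _ _] [hom_h h_triv].
have h_hom : homdeg DA DC 0 h by case: hom_h.
have h_cone := tc_homotopy_cone hom_h.
pose g := cup_inverse h_hom h_cone C_cocomplete.
have hg1 := cup_inverse_r h_hom h_cone C_cocomplete.
have gh1 := cup_inverse_l h_hom h_cone C_cocomplete.
have g_hom : homdeg DA DC 0 g by apply: cup_inverse_homdeg.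
exists g; split=> // [c|].
  by exists (defect_order h_hom h_cone C_cocomplete c) => M; apply: cup_inverseE.
split; first exact: tc_homotopy_inverse t_lin u_lin hom_h g_hom hg1 gh1.
exact (atrivial_cup_inverse I_ideal (homdeg0_lin g_hom) gh1 h_triv).
Qed.
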